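(* Let $\mathbf{A}\in\mathbb{R}^{(\ell m)\times(qn)}$ with $\mathcal{E}=(\mathbf{E}_1,\dots,\mathbf{E}_p)$ and $\mathcal{M}_{\mathcal{E}}$ as in the context, and let $\mathcal{T}=[\![\mathbf{X},\mathbf{Y},\mathbf{Z}]\!]\in\mathbb{R}^{m\times p\times n}$ be a CP tensor approximating $\mathcal{T}_{\mathcal{E}}[\mathbf{A}]$, with $\mathbf{X}\in\mathbb{R}^{m\times r}$, $\mathbf{Y}\in\mathbb{R}^{p\times r}$, $\mathbf{Z}\in\mathbb{R}^{n\times r}$, i.e. $\mathcal{T}_{i,k,j}=\sum_{s=1}^r\mathbf{X}_{is}\mathbf{Y}_{ks}\mathbf{Z}_{js}$. Suppose $\mathbf{Y}=\mathbf{F}\mathbf{G}^\top$ with $\mathbf{F}\in\mathbb{R}^{p\times r}$ and $\mathbf{G}\in\mathbb{R}^{r\times r}$. Then \[\mathcal{M}_{\mathcal{E}}[\mathcal{T}]=\sum_{j=1}^r\Big(\sum_{k=1}^p f_{kj}\mathbf{E}_k\Big)\otimes\big(\mathbf{X}\,\mathrm{diag}(\mathbf{G}_{:,j})\,\mathbf{Z}^\top\big),\] a representation as a sum of Kronecker products of matrices.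
   Context: $\mathbf{A}$ is a block matrix with $\ell\times q$ blocks of size $m\times n$, whose blocks take exactly $p$ distinct values $\mathbf{A}_1,\dots,\mathbf{A}_p\in\mathbb{R}^{m\times n}$, $\mathbf{A}_k$ occurring at $\eta_k\ge1$ block positions. $\mathbf{E}_k\in\mathbb{R}^{\ell\times q}$ has $(i,j)$ entry $1/\sqrt{\eta_k}$ if $\mathbf{A}_k$ is the $(i,j)$ block of $\mathbf{A}$ and $0$ otherwise. $\mathcal{T}_{\mathcal{E}}[\mathbf{A}]\in\mathbb{R}^{m\times p\times n}$ has entries $\sqrt{\eta_k}(\mathbf{A}_k)_{ij}$ at position $(i,k,j)$. For $\mathcal{X}\in\mathbb{R}^{m\times p\times n}$, $\mathrm{sq}(\mathcal{X}_{:,k,:})$ is the $m\times n$ matrix with entries $\mathcal{X}_{i,k,j}$ and $\mathcal{M}_{\mathcal{E}}[\mathcal{X}]=\sum_{k=1}^p\mathbf{E}_k\otimes\mathrm{sq}(\mathcal{X}_{:,k,:})$. The Kronecker product $\mathbf{B}\otimes\mathbf{C}$ has $(i,j)$ block $b_{ij}\mathbf{C}$. $f_{kj}$ are the entries of $\mathbf{F}$, $\mathbf{G}_{:,j}$ is the $j$th column of $\mathbf{G}$, and $\mathrm{diag}(\mathbf{v})$ is the diagonal matrix with diagonal $\mathbf{v}$. *)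

From mathcomp Require Import all_boot all_order all_algebra.
From mathcomp Require Export mxtens.
Set Implicit Arguments. Unset Strict Implicit. Unset Printing Implicit Defensive.
Import Order.TTheory GRing.Theory Num.Theory.
Local Open Scope ring_scope.

(* Kronecker product: mathcomp real_closed's tensmx, (B *t C) has (i,j) block
   b_ij C, with row index i*m + i' (mxtens_index). *)

Definition tensor3 (R : Type) (m p n : nat) := 'I_m -> 'I_p -> 'I_n -> R.

Definition sq_slice (R : Type) m p n (X : tensor3 R m p n) (k : 'I_p)
  : 'M[R]_(m, n) := \matrix_(i, j) X i k j.

(* eta_k : number of block positions (i,j) carrying the k-th distinct block *)
Definition eta l q p (blk : 'I_l -> 'I_q -> 'I_p) (k : 'I_p) : nat :=
  #|[set ij : 'I_l * 'I_q | blk ij.1 ij.2 == k]|.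

Definition Emat (R : rcfType) l q p (blk : 'I_l -> 'I_q -> 'I_p) (k : 'I_p)
  : 'M[R]_(l, q) :=
  \matrix_(i, j) (if blk i j == k then (Num.sqrt ((eta blk k)%:R : R))^-1 else 0).

Definition M_E (R : rcfType) l q m n p (blk : 'I_l -> 'I_q -> 'I_p)
  (X : tensor3 R m p n) : 'M[R]_(l * m, q * n) :=
  \sum_(k < p) (Emat R blk k *t sq_slice X k).

Definition T_E (R : rcfType) l q m n p (blk : 'I_l -> 'I_q -> 'I_p)
  (Ablk : 'I_p -> 'M[R]_(m, n)) : tensor3 R m p n :=
  fun i k j => Num.sqrt ((eta blk k)%:R : R) * Ablk k i j.

Definition cp_tensor (R : pzRingType) m p n r
  (X : 'M[R]_(m, r)) (Y : 'M[R]_(p, r)) (Z : 'M[R]_(n, r)) : tensor3 R m p n :=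
  fun i k j => \sum_(s < r) X i s * Y k s * Z j s.

From mathcomp Require Import all_boot all_order all_algebra.
From mathcomp Require Import mxtens.
Import Order.TTheory GRing.Theory Num.Theory.
Local Open Scope ring_scope.

(* The k-th frontal slice of [[X, Y, Z]] is X diag(Y_{k,:}) Z^T.  When Y = F G^T,
   the row Y_{k,:} is sum_j f_kj G_{:,j}^T, so each slice is a combination of the r
   matrices X diag(G_{:,j}) Z^T; bilinearity of the Kronecker product then lets the
   coefficients f_kj move from the right factor to the left one. *)

Section TensmxLinear.

Variable R : comPzRingType.
Variables m n p q : nat.

Lemma tensmx_suml (I : Type) (s : seq I) (P : pred I)
    (A : I -> 'M[R]_(m, n)) (B : 'M[R]_(p, q)) :
  (\sum_(i <- s | P i) A i) *t B = \sum_(i <- s | P i) (A i *t B).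
Proof.
apply/matrixP => i j; rewrite summxE mxE summxE big_distrl /=.
by apply: eq_bigr => k _; rewrite mxE.
Qed.

Lemma tensmx_sumr (I : Type) (s : seq I) (P : pred I)
    (A : 'M[R]_(m, n)) (B : I -> 'M[R]_(p, q)) :
  A *t (\sum_(i <- s | P i) B i) = \sum_(i <- s | P i) (A *t B i).
Proof.
apply/matrixP => i j; rewrite summxE mxE summxE big_distrr /=.
by apply: eq_bigr => k _; rewrite mxE.
Qed.

Lemma tensmxZl (a : R) (A : 'M[R]_(m, n)) (B : 'M[R]_(p, q)) :
  (a *: A) *t B = a *: (A *t B).
Proof. by apply/matrixP => i j; rewrite !mxE mulrA. Qed.

Lemma tensmxZr (a : R) (A : 'M[R]_(m, n)) (B : 'M[R]_(p, q)) :
  A *t (a *: B) = a *: (A *t B).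
Proof. by apply/matrixP => i j; rewrite !mxE mulrCA. Qed.

Lemma sum_tensmx_combination (I J : finType) (E : I -> 'M[R]_(m, n))
    (f : I -> J -> R) (B : J -> 'M[R]_(p, q)) :
  \sum_(k : I) (E k *t \sum_(j : J) f k j *: B j) =
  \sum_(j : J) ((\sum_(k : I) f k j *: E k) *t B j).
Proof.
under eq_bigr do rewrite tensmx_sumr; under eq_bigr do under eq_bigr do rewrite tensmxZr.
under [RHS]eq_bigr do rewrite tensmx_suml; under [RHS]eq_bigr do under eq_bigr do rewrite tensmxZl.
exact: exchange_big.
Qed.

End TensmxLinear.

Lemma sq_slice_cp_tensor (R : pzRingType) (m p n r : nat)
    (X : 'M[R]_(m, r)) (Y : 'M[R]_(p, r)) (Z : 'M[R]_(n, r)) (k : 'I_p) :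
  sq_slice (cp_tensor X Y Z) k = X *m diag_mx (row k Y) *m Z^T.
Proof.
apply/matrixP => i j; rewrite !mxE.
by apply: eq_bigr => s _; rewrite mul_mx_diag !mxE.
Qed.

Lemma row_mulmx_tr (R : comPzRingType) (p r s : nat)
    (F : 'M[R]_(p, r)) (G : 'M[R]_(s, r)) (k : 'I_p) :
  row k (F *m G^T) = \sum_(j < r) F k j *: (col j G)^T.
Proof.
rewrite row_mul mulmx_sum_row.
by apply: eq_bigr => j _; rewrite tr_col mxE.
Qed.

Lemma sq_slice_cp_tensor_factored (R : comPzRingType) (m p n r s : nat)
    (X : 'M[R]_(m, s)) (F : 'M[R]_(p, r)) (G : 'M[R]_(s, r))
    (Z : 'M[R]_(n, s)) (k : 'I_p) :
  sq_slice (cp_tensor X (F *m G^T) Z) k =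
  \sum_(j < r) F k j *: (X *m diag_mx (col j G)^T *m Z^T).
Proof.
rewrite sq_slice_cp_tensor row_mulmx_tr linear_sum mulmx_sumr mulmx_suml.
by apply: eq_bigr => j _; rewrite linearZ /= -scalemxAr -scalemxAl.
Qed.

Theorem corollary4p2 (R : rcfType) (l q m n p r : nat)
  (A : 'M[R]_(l * m, q * n))
  (Ablk : 'I_p -> 'M[R]_(m, n)) (blk : 'I_l -> 'I_q -> 'I_p)
  (hA : forall (i : 'I_l) (j : 'I_q) (i' : 'I_m) (j' : 'I_n),
      A (mxtens_index (i, i')) (mxtens_index (j, j')) = Ablk (blk i j) i' j')
  (hdistinct : injective Ablk)
  (hocc : forall k : 'I_p, (0 < eta blk k)%N)
  (X : 'M[R]_(m, r)) (Y : 'M[R]_(p, r)) (Z : 'M[R]_(n, r))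
  (F : 'M[R]_(p, r)) (G : 'M[R]_(r, r))
  (hY : Y = F *m G^T) :
  M_E blk (cp_tensor X Y Z) =
  \sum_(j < r) ((\sum_(k < p) F k j *: Emat R blk k)
                  *t (X *m diag_mx (col j G)^T *m Z^T)).
Proof.
rewrite /M_E hY.
under eq_bigr do rewrite sq_slice_cp_tensor_factored.
exact: sum_tensmx_combination.
Qed.
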